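(* Let $\mathcal{C}$ be a deflation-exact category and $\mathcal{A}$ an admissibly deflation-percolating subcategory. Consider a commutative diagram $$\begin{array}{ccccc} X&\rightarrowtail&Y&\twoheadrightarrow&Z\\ \downarrow{\scriptstyle f}&&\downarrow{\scriptstyle g}&&\|\\ X'&\rightarrowtail&Y'&\twoheadrightarrow&Z\end{array}$$ whose rows are conflations and whose right vertical map is the identity of $Z$. (1) If $f$ is an $\mathcal{A}^{-1}$-inflation, then $g$ is an $\mathcal{A}^{-1}$-inflation. (2) If $f$ is an $\mathcal{A}^{-1}$-deflation, then $g$ is an $\mathcal{A}^{-1}$-deflation.
   Context: A conflation category is an additive category with a class of kernel-cokernel pairs (closed under isomorphisms) called conflations; first map an inflation, second a deflation. A deflation-exact category is a conflation category satisfying: (R0) $1_0$ is a deflation; (R1) composites of deflations are deflations; (R2) pullbacks of deflations along arbitrary morphisms exist and are deflations. A non-empty full subcategory $\mathcal{A}$ is admissibly deflation-percolating if: (A1) for every conflation $A'\rightarrowtail A\twoheadrightarrow A''$, $A\in\mathcal{A}$ iff $A',A''\in\mathcal{A}$; (A2) every morphism $C\to A$ with $A\in\mathcal{A}$ factors as a deflation $C\twoheadrightarrow A'$ followed by an inflation $A'\rightarrowtail A$ with $A'\in\mathcal{A}$; (A3) if $a\colon C\rightarrowtail D$ is an inflation and $b\colon C\twoheadrightarrow A$ a deflation with $A\in\mathcal{A}$, the pushout of $a$ along $b$ exists and yields a deflation $D\twoheadrightarrow P$ and an inflation $A\rightarrowtail P$. An $\mathcal{A}^{-1}$-inflation is an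 inflation with cokernel in $\mathcal{A}$; an $\mathcal{A}^{-1}$-deflation is a deflation with kernel in $\mathcal{A}$. *)

From HB Require Import structures.
From mathcomp Require Import all_boot all_algebra.
Set Implicit Arguments. Unset Strict Implicit. Unset Printing Implicit Defensive.
Import GRing.Theory.
Local Open Scope ring_scope.

Record AddCat := {
  Obj :> Type;
  Mor : Obj -> Obj -> zmodType;
  mcomp : forall a b c : Obj, Mor b c -> Mor a b -> Mor a c;
  idm : forall a : Obj, Mor a a;
  compA : forall a b c d (h : Mor c d) (g : Mor b c) (f : Mor a b),
      mcomp h (mcomp g f) = mcomp (mcomp h g) f;
  comp1m : forall a b (f : Mor a b), mcomp (idm b) f = f;
  compm1 : forall a b (f : Mor a b), mcomp f (idm a) = f;
  compDl : forall a b c (g1 g2 : Mor b c) (f : Mor a b),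
      mcomp (g1 + g2) f = mcomp g1 f + mcomp g2 f;
  compDr : forall a b c (g : Mor b c) (f1 f2 : Mor a b),
      mcomp g (f1 + f2) = mcomp g f1 + mcomp g f2;
  has_zero : exists z : Obj, idm z = 0;
  has_biprod : forall a b : Obj, exists (c : Obj) (i1 : Mor a c) (i2 : Mor b c)
      (p1 : Mor c a) (p2 : Mor c b),
      [/\ mcomp p1 i1 = idm a, mcomp p2 i2 = idm b, mcomp p1 i2 = 0,
          mcomp p2 i1 = 0 & mcomp i1 p1 + mcomp i2 p2 = idm c]
}.
Arguments mcomp {a0 a b c} g f : rename.
Arguments idm {a0} a : rename.

Section CatNotions.
Variable C : AddCat.

Definition is_zero_obj (z : C) : Prop := idm z = 0.

Definition is_iso (a b : C) (f : Mor a b) : Prop :=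
  exists g : Mor b a, mcomp g f = idm a /\ mcomp f g = idm b.

Definition is_kernel (a b d : C) (f : Mor a b) (g : Mor b d) : Prop :=
  mcomp g f = 0 /\
  forall (e : C) (h : Mor e b), mcomp g h = 0 ->
    exists u : Mor e a, mcomp f u = h /\ forall u' : Mor e a, mcomp f u' = h -> u' = u.

Definition is_cokernel (a b d : C) (f : Mor a b) (g : Mor b d) : Prop :=
  mcomp g f = 0 /\
  forall (e : C) (h : Mor b e), mcomp h f = 0 ->
    exists u : Mor d e, mcomp u g = h /\ forall u' : Mor d e, mcomp u' g = h -> u' = u.

Definition is_kernel_cokernel_pair (a b d : C) (f : Mor a b) (g : Mor b d) : Prop :=
  is_kernel f g /\ is_cokernel f g.

(* pullback square:  P --t'--> B
                     |p'        |p
                     v          v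
                     C' --t--> D          *)
Definition is_pullback (b c' d P : C) (p : Mor b d) (t : Mor c' d)
    (t' : Mor P b) (p' : Mor P c') : Prop :=
  mcomp p t' = mcomp t p' /\
  forall (e : C) (x : Mor e b) (y : Mor e c'), mcomp p x = mcomp t y ->
    exists u : Mor e P, (mcomp t' u = x /\ mcomp p' u = y) /\
      forall u' : Mor e P, mcomp t' u' = x /\ mcomp p' u' = y -> u' = u.

(* pushout square:  c --a--> d
                    |b        |b'
                    v         v
                    A --a'--> P           *)
Definition is_pushout (c d A P : C) (a : Mor c d) (b : Mor c A)
    (b' : Mor d P) (a' : Mor A P) : Prop :=
  mcomp b' a = mcomp a' b /\
  forall (e : C) (x : Mor d e) (y : Mor A e), mcomp x a = mcomp y b ->
    exists u : Mor P e, (mcomp u b' = x /\ mcomp u a' = y) /\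
      forall u' : Mor P e, mcomp u' b' = x /\ mcomp u' a' = y -> u' = u.
End CatNotions.

Record ConfCat := {
  ccat :> AddCat;
  conf : forall a b c : ccat, Mor a b -> Mor b c -> Prop;
  conf_kc : forall a b c (f : Mor a b) (g : Mor b c),
      conf f g -> is_kernel_cokernel_pair f g;
  conf_iso : forall a b c a' b' c' (f : Mor a b) (g : Mor b c)
      (f' : Mor a' b') (g' : Mor b' c') (u : Mor a a') (v : Mor b b') (w : Mor c c'),
      is_iso u -> is_iso v -> is_iso w -> conf f g ->
      mcomp v f = mcomp f' u -> mcomp w g = mcomp g' v -> conf f' g'
}.

Section ConfNotions.
Variable C : ConfCat.

Definition inflation (a b : C) (f : Mor a b) : Prop :=
  exists (c : C) (g : Mor b c), conf f g.
Definition deflation (b c : C) (g : Mor b c) : Prop :=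
  exists (a : C) (f : Mor a b), conf f g.

Definition deflation_exact : Prop :=
  (forall z : C, is_zero_obj z -> deflation (idm z)) /\
  (forall a b c (f : Mor a b) (g : Mor b c),
              deflation f -> deflation g -> deflation (mcomp g f)) /\
  (forall b d c' (p : Mor b d) (t : Mor c' d), deflation p ->
              exists (P : C) (t' : Mor P b) (p' : Mor P c'),
                is_pullback p t t' p' /\ deflation p').

(* admissibly deflation-percolating full subcategory, given by its objects *)
Definition adm_defl_percolating (A : C -> Prop) : Prop :=
  (exists a : C, A a) /\
  (forall a b c (f : Mor a b) (g : Mor b c), conf f g ->
              (A b <-> A a /\ A c)) /\
  (forall (c a : C) (f : Mor c a), A a ->
              exists (a' : C) (d : Mor c a') (i : Mor a' a),
                [/\ A a', deflation d, inflation i & f = mcomp i d]) /\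
  (forall (c d a : C) (x : Mor c d) (y : Mor c a),
              inflation x -> deflation y -> A a ->
              exists (P : C) (y' : Mor d P) (x' : Mor a P),
                [/\ is_pushout x y y' x', deflation y' & inflation x']).

Definition Ainv_inflation (A : C -> Prop) (a b : C) (f : Mor a b) : Prop :=
  exists (c : C) (g : Mor b c), conf f g /\ A c.
Definition Ainv_deflation (A : C -> Prop) (b c : C) (g : Mor b c) : Prop :=
  exists (a : C) (f : Mor a b), conf f g /\ A a.
End ConfNotions.

From Pilot Require Import Defs.
From mathcomp Require Import all_boot all_algebra.

(* The left square is a pushout.  The pullback of p along p' splits as Y ⊕ X',
   and [g, i'] : Y ⊕ X' -> Y' is a deflation; for x : Y -> E and y : X' -> E with
   x i = y f, the map [x, y] kills the kernel of [g, i'] and so descends to Y'.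

   (1) Let X >-> X' ->> W be a conflation with W in A.  The pushout gives k : Y' -> W
   with k g = 0 and k i' = h.  A3 pushes i' out along h to some P ≅ W ⊕ Z, and k is
   the deflation Y' ->> P followed by the projection onto W, hence a deflation.  Its
   kernel is g: g is monic, and a map e into Y' with k e = 0 factors through g after
   pulling back the deflation [g, i'] along e, hence already before.

   (2) Let K >-> X ->> X' be a conflation with K in A.  Then i k is a kernel of g and,
   pushouts preserving cokernels, g is its cokernel; it remains to see that i k is an
   inflation.  The map g pr : Y ⊕ X -> Y' is [g, i'] composed with a pullback of f,
   hence a deflation, with kernel (i k) ⊕ 1 : K ⊕ X -> Y ⊕ X.  Pushing this inflation
   out along the projection K ⊕ X -> K, which A3 allows as K is in A, gives back i k. *)

Set Implicit Arguments. Unset Strict Implicit. Unset Printing Implicit Defensive.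
Import GRing.Theory.
Local Open Scope ring_scope.

Local Notation compA := Defs.compA.
Local Notation "g ∘ f" := (mcomp g f) (at level 40, left associativity).

Section Additive.
Variable C : AddCat.
Implicit Types a b c d e : C.

Lemma comp0m a b c (f : Mor a b) : (0 : Mor b c) ∘ f = 0.
Proof. by apply: (addrI (0 ∘ f)); rewrite -compDl !addr0. Qed.

Lemma compm0 a b c (g : Mor b c) : g ∘ (0 : Mor a b) = 0.
Proof. by apply: (addrI (g ∘ 0)); rewrite -compDr !addr0. Qed.

Lemma compNl a b c (g : Mor b c) (f : Mor a b) : - g ∘ f = - (g ∘ f).
Proof. by apply: (addrI (g ∘ f)); rewrite -compDl !subrr comp0m. Qed.

Lemma compNr a b c (g : Mor b c) (f : Mor a b) : g ∘ - f = - (g ∘ f).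
Proof. by apply: (addrI (g ∘ f)); rewrite -compDr !subrr compm0. Qed.

Lemma compBl a b c (g1 g2 : Mor b c) (f : Mor a b) : (g1 - g2) ∘ f = g1 ∘ f - g2 ∘ f.
Proof. by rewrite compDl compNl. Qed.

Lemma compBr a b c (g : Mor b c) (f1 f2 : Mor a b) : g ∘ (f1 - f2) = g ∘ f1 - g ∘ f2.
Proof. by rewrite compDr compNr. Qed.

Lemma zero_obj_tgt_eq0 a z (m : Mor a z) : is_zero_obj z -> m = 0.
Proof. by move=> z0; rewrite -[m]comp1m z0 comp0m. Qed.

Definition is_mono a b (m : Mor a b) : Prop :=
  forall e (u v : Mor e a), m ∘ u = m ∘ v -> u = v.

Definition is_epi a b (m : Mor a b) : Prop :=
  forall e (u v : Mor b e), u ∘ m = v ∘ m -> u = v.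

Lemma monoP a b (m : Mor a b) :
  (forall e (u : Mor e a), m ∘ u = 0 -> u = 0) -> is_mono m.
Proof.
move=> m0 e u v muv; apply/eqP; rewrite -subr_eq0; apply/eqP/m0.
by rewrite compBr muv subrr.
Qed.

Lemma kernel_mono a b d (f : Mor a b) (g : Mor b d) : is_kernel f g -> is_mono f.
Proof.
move=> [gf0 kerf] e u v fuv.
have gfu0 : g ∘ (f ∘ u) = 0 by rewrite compA gf0 comp0m.
have [w [_ uniq_w]] := kerf e _ gfu0.
by rewrite (uniq_w u) // (uniq_w v).
Qed.

Lemma cokernel_epi a b d (f : Mor a b) (g : Mor b d) : is_cokernel f g -> is_epi g.
Proof.
move=> [gf0 cokg] e u v ugv.
have ugf0 : u ∘ g ∘ f = 0 by rewrite -compA gf0 compm0.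
have [w [_ uniq_w]] := cokg e _ ugf0.
by rewrite (uniq_w u) // (uniq_w v).
Qed.

Lemma kernel_intro a b d (f : Mor a b) (g : Mor b d) :
  g ∘ f = 0 -> is_mono f ->
  (forall e (h : Mor e b), g ∘ h = 0 -> exists u, f ∘ u = h) -> is_kernel f g.
Proof.
move=> gf0 fmono fact; split=> // e h gh0.
have [u fu] := fact e h gh0.
by exists u; split=> // u' fu'; apply: fmono; rewrite fu fu'.
Qed.

Lemma cokernel_intro a b d (f : Mor a b) (g : Mor b d) :
  g ∘ f = 0 -> is_epi g ->
  (forall e (h : Mor b e), h ∘ f = 0 -> exists u, u ∘ g = h) -> is_cokernel f g.
Proof.
move=> gf0 gepi fact; split=> // e h hf0.
have [u ug] := fact e h hf0.
by exists u; split=> // u' u'g; apply: gepi; rewrite ug u'g.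
Qed.

Lemma iso_idm a : is_iso (idm a).
Proof. by exists (idm a); rewrite comp1m. Qed.

Lemma pullback_ext b c' d P e (p : Mor b d) (t : Mor c' d) (t' : Mor P b) (p' : Mor P c')
    (u v : Mor e P) :
  is_pullback p t t' p' -> t' ∘ u = t' ∘ v -> p' ∘ u = p' ∘ v -> u = v.
Proof.
move=> [sq pb] t'u p'u.
have usq : p ∘ (t' ∘ u) = t ∘ (p' ∘ u) by rewrite !compA sq.
have [w [_ uniq_w]] := pb e _ _ usq.
by rewrite (uniq_w u) // (uniq_w v).
Qed.

Lemma pullback_iso b c' d P P' (p : Mor b d) (t : Mor c' d)
    (t1 : Mor P b) (p1 : Mor P c') (t2 : Mor P' b) (p2 : Mor P' c') :
  is_pullback p t t1 p1 -> is_pullback p t t2 p2 ->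
  exists phi : Mor P' P, [/\ is_iso phi, t1 ∘ phi = t2 & p1 ∘ phi = p2].
Proof.
move=> pb1 pb2.
have [phi [[t1phi p1phi] _]] := pb1.2 _ _ _ pb2.1.
have [psi [[t2psi p2psi] _]] := pb2.2 _ _ _ pb1.1.
exists phi; split=> //; exists psi; split.
- by apply: (pullback_ext pb2); rewrite compA ?t2psi ?p2psi ?t1phi ?p1phi compm1.
- by apply: (pullback_ext pb1); rewrite compA ?t1phi ?p1phi ?t2psi ?p2psi compm1.
Qed.

Lemma pushout_ext c d a P e (x : Mor c d) (y : Mor c a) (y' : Mor d P) (x' : Mor a P)
    (u v : Mor P e) :
  is_pushout x y y' x' -> u ∘ y' = v ∘ y' -> u ∘ x' = v ∘ x' -> u = v.
Proof.
move=> [sq po] uy' ux'.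
have usq : u ∘ y' ∘ x = u ∘ x' ∘ y by rewrite -compA sq compA.
have [w [_ uniq_w]] := po e _ _ usq.
by rewrite (uniq_w u) // (uniq_w v).
Qed.

Lemma pushout_iso c d a P P' (x : Mor c d) (y : Mor c a)
    (y1 : Mor d P) (x1 : Mor a P) (y2 : Mor d P') (x2 : Mor a P') :
  is_pushout x y y1 x1 -> is_pushout x y y2 x2 ->
  exists phi : Mor P P', [/\ is_iso phi, phi ∘ y1 = y2 & phi ∘ x1 = x2].
Proof.
move=> po1 po2.
have [phi [[phiy1 phix1] _]] := po1.2 _ _ _ po2.1.
have [psi [[psiy2 psix2] _]] := po2.2 _ _ _ po1.1.
exists phi; split=> //; exists psi; split.
- by apply: (pushout_ext po1); rewrite -compA ?phiy1 ?phix1 ?psiy2 ?psix2 comp1m.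
- by apply: (pushout_ext po2); rewrite -compA ?psiy2 ?psix2 ?phiy1 ?phix1 comp1m.
Qed.


Lemma pushout_cokernel k c d a P (kc : Mor k c) (x : Mor c d) (y : Mor c a)
    (y' : Mor d P) (x' : Mor a P) :
  is_pushout x y y' x' -> is_cokernel kc y -> is_cokernel (x ∘ kc) y'.
Proof.
move=> [sq po] coky; have yepi := cokernel_epi coky.
apply: cokernel_intro.
- by rewrite compA sq -compA coky.1 compm0.
- move=> e u v uy'v.
  have usq : u ∘ y' ∘ x = u ∘ x' ∘ y by rewrite -compA sq compA.
  have [w [_ uniq_w]] := po e _ _ usq.
  rewrite (uniq_w u) // (uniq_w v) //; split=> //; apply: yepi.
  by rewrite -!compA -sq !compA uy'v.
- move=> e h hxk0.
  have hxk0' : h ∘ x ∘ kc = 0 by rewrite -compA.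
  have [w [wy _]] := coky.2 e _ hxk0'.
  have [u [[uy' _] _]] := po e h w (esym wy).
  by exists u.
Qed.

Definition is_biprod a b c (i1 : Mor a c) (i2 : Mor b c) (p1 : Mor c a) (p2 : Mor c b) :=
  [/\ p1 ∘ i1 = idm a, p2 ∘ i2 = idm b, p1 ∘ i2 = 0, p2 ∘ i1 = 0
    & i1 ∘ p1 + i2 ∘ p2 = idm c].

End Additive.

Section Biproducts.
Variables (C : AddCat) (Y X M : C).
Variables (iY : Mor Y M) (iX : Mor X M) (pY : Mor M Y) (pX : Mor M X).
Hypothesis bM : is_biprod iY iX pY pX.

Lemma biprod_ext e (u v : Mor e M) : pY ∘ u = pY ∘ v -> pX ∘ u = pX ∘ v -> u = v.
Proof.
case: bM => _ _ _ _ sumM uv1 uv2.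
by rewrite -[u]comp1m -[v]comp1m -sumM !compDl -!compA uv1 uv2.
Qed.

Lemma biprod_pullback X' Q (s : Mor Y Q) (j : Mor X' Q) (q : Mor Q Y) (r : Mor Q X')
    (f : Mor X X') (h : Mor X Y) :
  is_biprod s j q r -> is_pullback f r pX (s ∘ (pY + h ∘ pX) + j ∘ f ∘ pX).
Proof.
case: (bM) => pYiY pXiX pYiX pXiY _ [qs rj qj rs sumQ].
set mu := s ∘ _ + _.
have rmu : r ∘ mu = f ∘ pX.
  by rewrite /mu compDr !compA rs rj comp0m comp1m add0r.
have qmu : q ∘ mu = pY + h ∘ pX.
  by rewrite /mu compDr !compA qs qj comp1m !comp0m addr0.
split=> [|e x y fxry]; first by rewrite rmu.
set u := iY ∘ (q ∘ y - h ∘ x) + iX ∘ x.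
have pXu : pX ∘ u = x.
  by rewrite /u compDr !compA pXiY pXiX comp0m comp1m add0r.
have pYu : pY ∘ u = q ∘ y - h ∘ x.
  by rewrite /u compDr !compA pYiY pYiX comp1m comp0m addr0.
exists u; split.
  split=> //; rewrite /mu compDl -!compA compDl -compA pYu pXu subrK fxry.
  by rewrite !compA -compDl sumQ comp1m.
move=> u' [pXu' muu'].
apply: biprod_ext; last by rewrite pXu' pXu.
by rewrite pYu -muu' -pXu' !compA qmu compDl addrK.
Qed.

Variables (K N : C) (c1 : Mor K N) (c2 : Mor X N) (pi1 : Mor N K) (pi2 : Mor N X).
Hypothesis bN : is_biprod c1 c2 pi1 pi2.
Variable a : Mor K Y.

Let x := iY ∘ a ∘ pi1 + iX ∘ pi2.

Let pYx : pY ∘ x = a ∘ pi1.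
Proof.
case: bM => pYiY _ pYiX _ _.
by rewrite /x compDr !compA pYiY pYiX comp1m comp0m addr0.
Qed.

Let pXx : pX ∘ x = pi2.
Proof.
case: bM => _ pXiX _ pXiY _.
by rewrite /x compDr !compA pXiY pXiX comp1m !comp0m add0r.
Qed.

Let xc1 : x ∘ c1 = iY ∘ a.
Proof.
case: bN => pi1c1 _ _ pi2c1 _.
by rewrite /x compDl -!compA pi1c1 pi2c1 !compm0 compm1 addr0.
Qed.

Let xc2 : x ∘ c2 = iX.
Proof.
case: bN => _ pi2c2 pi1c2 _ _.
by rewrite /x compDl -!compA pi1c2 pi2c2 !compm0 compm1 add0r.
Qed.

Lemma biprod_map_kernel Y' (b : Mor Y Y') : is_kernel a b -> is_kernel x (b ∘ pY).
Proof.
move=> kera; have amono := kernel_mono kera.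
case: (bM) => _ _ _ _ sumM; case: (bN) => _ _ _ _ sumN.
apply: kernel_intro.
- by rewrite -compA pYx compA kera.1 comp0m.
- apply: monoP => e u xu0.
  have pi1u : pi1 ∘ u = 0.
    by apply: amono; rewrite compA -pYx -compA xu0 !compm0.
  have pi2u : pi2 ∘ u = 0 by rewrite -pXx -compA xu0 compm0.
  by rewrite -[u]comp1m -sumN compDl -!compA pi1u pi2u !compm0 addr0.
- move=> e h bpYh0.
  have bpYh0' : b ∘ (pY ∘ h) = 0 by rewrite compA.
  have [v [av _]] := kera.2 e _ bpYh0'.
  exists (c1 ∘ v + c2 ∘ (pX ∘ h)).
  by rewrite compDr !compA xc1 xc2 -(compA iY) av !compA -compDl sumM comp1m.
Qed.

Lemma biprod_map_pushout : is_pushout x pi1 pY a.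
Proof.
case: (bM) => pYiY _ _ _ sumM; case: (bN) => pi1c1 _ pi1c2 _ _.
split=> [|e u w uxw]; first exact: pYx.
have uiX : u ∘ iX = 0 by rewrite -xc2 compA uxw -compA pi1c2 compm0.
exists (u ∘ iY); split.
  split; first by rewrite -[u in RHS]compm1 -sumM compDr !compA uiX comp0m addr0.
  by rewrite -compA -xc1 compA uxw -compA pi1c1 compm1.
by move=> v [<- _]; rewrite -compA pYiY compm1.
Qed.

End Biproducts.

Section Conflations.
Variable C : ConfCat.
Implicit Types a b c d e : C.

Lemma inflation_mono a b (f : Mor a b) : inflation f -> is_mono f.
Proof. by move=> [c [g /conf_kc[kerf _]]]; exact: kernel_mono kerf. Qed.

Lemma deflation_epi b c (g : Mor b c) : deflation g -> is_epi g.
Proof. by move=> [a [f /conf_kc[_ cokg]]]; exact: cokernel_epi cokg. Qed.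

Lemma deflation_kernel_conf a b c (f : Mor a b) (g : Mor b c) :
  deflation g -> is_kernel f g -> conf f g.
Proof.
move=> [a' [f' conf'g]] kerf; have [kerf' _] := conf_kc conf'g.
have [u [f'u _]] := kerf.2 a' f' kerf'.1.
have [v [fv _]] := kerf'.2 a f kerf.1.
apply: (conf_iso (u := u) (v := idm b) (w := idm c) _ (iso_idm _) (iso_idm _) conf'g).
- exists v; split.
  + by apply: (kernel_mono kerf'); rewrite compA fv f'u compm1.
  + by apply: (kernel_mono kerf); rewrite compA f'u fv compm1.
- by rewrite comp1m f'u.
- by rewrite comp1m compm1.
Qed.

Lemma inflation_cokernel_conf a b c (f : Mor a b) (g : Mor b c) :
  inflation f -> is_cokernel f g -> conf f g.
Proof.
move=> [c' [g' confg']] cokg; have [_ cokg'] := conf_kc confg'.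
have [u [ug' _]] := cokg'.2 c g cokg.1.
have [v [vg _]] := cokg.2 c' g' cokg'.1.
apply: (conf_iso (u := idm a) (v := idm b) (w := u) (iso_idm _) (iso_idm _) _ confg').
- exists v; split.
  + by apply: (cokernel_epi cokg'); rewrite -compA ug' vg comp1m.
  + by apply: (cokernel_epi cokg); rewrite -compA vg ug' comp1m.
- by rewrite comp1m compm1.
- by rewrite compm1 ug'.
Qed.

Lemma pushout_inflation c d a P P' (x : Mor c d) (y : Mor c a)
    (y1 : Mor d P) (x1 : Mor a P) (y2 : Mor d P') (x2 : Mor a P') :
  is_pushout x y y1 x1 -> is_pushout x y y2 x2 -> inflation x1 -> inflation x2.
Proof.
move=> po1 po2 [k [q confq]].
have [phi [[psi [psiphi phipsi]] _ phix1]] := pushout_iso po2 po1.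
exists k, (q ∘ phi).
apply: (conf_iso (u := idm a) (v := psi) (w := idm k) (iso_idm _) _ (iso_idm _) confq).
- by exists phi.
- by rewrite -phix1 compA psiphi comp1m compm1.
- by rewrite comp1m -compA phipsi compm1.
Qed.

Lemma mono_factor_through_deflation b y y' e (m : Mor y y') (d : Mor b e)
    (h : Mor e y') (t : Mor b y) :
  is_mono m -> deflation d -> h ∘ d = m ∘ t -> exists v, h = m ∘ v.
Proof.
move=> mmono [k [c confc]] hd; have [kerc cokd] := conf_kc confc.
have tc0 : t ∘ c = 0.
  by apply: mmono; rewrite compA -hd -compA kerc.1 !compm0.
have [v [vd _]] := cokd.2 _ t tc0.
by exists v; apply: (cokernel_epi cokd); rewrite -compA vd.
Qed.

End Conflations.

Section DeflationExact.
Variables (C : ConfCat) (A : C -> Prop).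
Hypotheses (hC : deflation_exact C) (hA : adm_defl_percolating A).
Implicit Types a b c d e : C.

Lemma deflation_comp a b c (f : Mor a b) (g : Mor b c) :
  deflation f -> deflation g -> deflation (g ∘ f).
Proof. by case: hC => _ [R1 _]; exact: R1. Qed.

Lemma pullback_deflation b d c' P (p : Mor b d) (t : Mor c' d) (t' : Mor P b) (p' : Mor P c') :
  is_pullback p t t' p' -> deflation p -> deflation p'.
Proof.
move=> pb dp; case: hC => _ [_ R2].
have [P2 [t2 [p2 [pb2 [k [q confq]]]]]] := R2 _ _ _ p t dp.
have [phi [[psi [psiphi phipsi]] _ p'phi]] := pullback_iso pb pb2.
exists k, (phi ∘ q).
apply: (conf_iso (u := idm k) (v := phi) (w := idm c') (iso_idm _) _ (iso_idm _) confq).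
- by exists psi.
- by rewrite compm1.
- by rewrite comp1m p'phi.
Qed.

Lemma deflation_to_zero e : exists z, is_zero_obj z /\ deflation (0 : Mor e z).
Proof.
(* Axiom R0 only provides the deflation [idm 0]; [e -> 0] comes from A2 applied to [0 : e -> a]. *)
case: hA => [[a Aa] [_ [A2 _]]].
have [z [d [m [_ dd im e0]]]] := A2 e a 0 Aa.
have m0 : m = 0 by apply: (deflation_epi dd); rewrite -e0 comp0m.
have z0 : is_zero_obj z by apply: (inflation_mono im); rewrite m0 !comp0m.
by exists z; split; rewrite // -(zero_obj_tgt_eq0 d z0).
Qed.

Lemma biprod_proj_deflation a b c (i1 : Mor a c) (i2 : Mor b c) (p1 : Mor c a) (p2 : Mor c b) :
  is_biprod i1 i2 p1 p2 -> deflation p1.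
Proof.
move=> [p1i1 p2i2 p1i2 p2i1 sumc].
have [z [_ dz]] := deflation_to_zero b.
apply: (pullback_deflation (p := 0 : Mor b z) (t := 0 : Mor a z) (t' := p2)) => //.
split=> [|e x y _]; first by rewrite !comp0m.
exists (i2 ∘ x + i1 ∘ y); split.
  by rewrite !compDr !compA p2i2 p2i1 p1i2 p1i1 !comp0m !comp1m addr0 add0r.
by move=> u [<- <-]; rewrite !compA addrC -compDl sumc comp1m.
Qed.

Lemma kernel_inflation_of_proj_deflation K Y Y' X M (a : Mor K Y) (b : Mor Y Y')
    (iY : Mor Y M) (iX : Mor X M) (pY : Mor M Y) (pX : Mor M X) :
  A K -> is_biprod iY iX pY pX -> is_kernel a b -> deflation (b ∘ pY) -> inflation a.
Proof.
move=> AK bM kera dbpY; case: hA => _ [_ [_ A3]].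
have [N [c1 [c2 [pi1 [pi2 bN]]]]] := has_biprod K X.
have ix : inflation (iY ∘ a ∘ pi1 + iX ∘ pi2).
  exists Y', (b ∘ pY); exact: deflation_kernel_conf dbpY (biprod_map_kernel bM bN kera).
have [P [y' [x' [po _ ix']]]] := A3 _ _ _ _ _ ix (biprod_proj_deflation bN) AK.
exact: pushout_inflation po (biprod_map_pushout bM bN a) ix'.
Qed.

End DeflationExact.

Section Diagram.
Variables (C : ConfCat) (A : C -> Prop).
Hypotheses (hC : deflation_exact C) (hA : adm_defl_percolating A).
Variables (X Y Z X' Y' : C) (i : Mor X Y) (p : Mor Y Z) (i' : Mor X' Y') (p' : Mor Y' Z).
Variables (f : Mor X X') (g : Mor Y Y').
Hypotheses (hrow1 : conf i p) (hrow2 : conf i' p').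
Hypotheses (hsq1 : g ∘ i = i' ∘ f) (hsq2 : p' ∘ g = p).

Let kerp := (conf_kc hrow1).1.
Let kerp' := (conf_kc hrow2).1.
Let cokp := (conf_kc hrow1).2.

Lemma codiag_deflation : exists Q (s : Mor Y Q) (j : Mor X' Q) (q : Mor Q Y) (r : Mor Q X'),
  is_biprod s j q r /\ deflation (g ∘ q + i' ∘ r).
Proof.
case: hC => _ [_ R2].
have [Q [q [q' [pbQ dq']]]] := R2 _ _ _ p p' (ex_intro _ X (ex_intro _ i hrow1)).
have [pb pbQ_univ] := pbQ.
have p1g : p ∘ idm Y = p' ∘ g by rewrite compm1.
have [s [[qs q's] _]] := pbQ_univ Y _ _ p1g.
have p0i' : p ∘ (0 : Mor X' Y) = p' ∘ i' by rewrite compm0 kerp'.1.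
have [j [[qj q'j] _]] := pbQ_univ X' _ _ p0i'.
have p'q'sq0 : p' ∘ (q' ∘ (idm Q - s ∘ q)) = 0.
  by rewrite compA -pb -compA compBr compm1 compA qs comp1m subrr compm0.
have [r [i'r _]] := kerp'.2 _ _ p'q'sq0.
have jr : j ∘ r = idm Q - s ∘ q.
  apply: (pullback_ext pbQ); first by rewrite compA qj comp0m compBr compm1 compA qs comp1m subrr.
  by rewrite compA q'j i'r.
have rj : r ∘ j = idm X'.
  apply: (kernel_mono kerp'); rewrite compA i'r -compA compBl comp1m -compA qj.
  by rewrite compm0 subr0 q'j compm1.
have rs : r ∘ s = 0.
  apply: (kernel_mono kerp'); rewrite compA i'r -compA compBl comp1m -compA qs.
  by rewrite compm1 subrr !compm0.
have sum : s ∘ q + j ∘ r = idm Q by rewrite jr addrC subrK.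
exists Q, s, j, q, r; split; first by split.
by rewrite -q's i'r -compA -compDr addrC subrK compm1.
Qed.

Lemma square_pushout : is_pushout i f g i'.
Proof.
split=> [|e x y xiyf]; first exact: hsq1.
have [Q [s [j [q [r [[qs rj qj rs _] [K [k confk]]]]]]]] := codiag_deflation.
set d := g ∘ q + i' ∘ r in confk; have [kerk cokd] := conf_kc confk.
have ds : d ∘ s = g by rewrite /d compDl -!compA qs rs compm0 compm1 addr0.
have dj : d ∘ j = i' by rewrite /d compDl -!compA qj rj compm0 compm1 add0r.
have gqk : g ∘ (q ∘ k) = - (i' ∘ (r ∘ k)).
  by apply/eqP; rewrite -addr_eq0 !compA -compDl kerk.1.
have [w iw] : exists w, i ∘ w = q ∘ k.
  have pqk0 : p ∘ (q ∘ k) = 0.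
    by rewrite -hsq2 -compA gqk compNr compA kerp'.1 comp0m oppr0.
  by have [w [iw _]] := kerp.2 _ _ pqk0; exists w.
have rkfw : r ∘ k = - (f ∘ w).
  by apply: (kernel_mono kerp'); rewrite compNr (compA i' f) -hsq1 -compA iw gqk opprK.
have tk0 : (x ∘ q + y ∘ r) ∘ k = 0.
  by rewrite compDl -!compA -iw rkfw compNr !compA xiyf subrr.
have [u [ud _]] := cokd.2 _ _ tk0.
exists u; split.
  split.
  - by rewrite -ds compA ud compDl -!compA qs rs compm0 compm1 addr0.
  - by rewrite -dj compA ud compDl -!compA qj rj compm0 compm1 add0r.
move=> u' [u'g u'i']; apply: (cokernel_epi cokd).
by rewrite ud compDr !compA u'g u'i'.
Qed.

Lemma square_kernel_factor e (u : Mor e Y) : g ∘ u = 0 -> exists2 w, u = i ∘ w & f ∘ w = 0.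
Proof.
move=> gu0; have pu0 : p ∘ u = 0 by rewrite -hsq2 -compA gu0 compm0.
have [w [iw _]] := kerp.2 _ _ pu0; exists w => //.
by apply: (kernel_mono kerp'); rewrite compA -hsq1 -compA iw gu0 compm0.
Qed.

Lemma square_kernel K (k : Mor K X) : is_kernel k f -> is_kernel (i ∘ k) g.
Proof.
move=> kerk; apply: kernel_intro.
- by rewrite compA hsq1 -compA kerk.1 compm0.
- move=> e u v iku; apply: (kernel_mono kerk); apply: (kernel_mono kerp).
  by rewrite !compA.
- move=> e h /square_kernel_factor[w -> fw0].
  by have [v [kv _]] := kerk.2 _ _ fw0; exists v; rewrite -compA kv.
Qed.

Lemma square_proj_deflation M (iY : Mor Y M) (iX : Mor X M) (pY : Mor M Y) (pX : Mor M X) :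
  is_biprod iY iX pY pX -> deflation f -> deflation (g ∘ pY).
Proof.
move=> bM df; have [Q [s [j [q [r [bQ dd]]]]]] := codiag_deflation.
have [qs rj qj rs _] := bQ.
(* [mu] is [1 ⊕ f] after the shear [(y, x) |-> (y - i x, x)], so that [[g, i'] ∘ mu = g ∘ pY]. *)
set mu := s ∘ (pY + (- i) ∘ pX) + j ∘ f ∘ pX.
have qmu : q ∘ mu = pY - i ∘ pX.
  by rewrite /mu compDr !compA qs qj comp1m !comp0m addr0 compNl.
have rmu : r ∘ mu = f ∘ pX.
  by rewrite /mu compDr !compA rs rj comp0m comp1m add0r.
have -> : g ∘ pY = (g ∘ q + i' ∘ r) ∘ mu.
  rewrite compDl -!compA qmu rmu compBr (compA g i) hsq1 !compA.
  by rewrite addrAC -addrA subrr addr0.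
exact (deflation_comp hC (pullback_deflation hC (biprod_pullback bM f (- i) bQ) df) dd).
Qed.

Lemma square_Ainv_deflation : Ainv_deflation A f -> Ainv_deflation A g.
Proof.
move=> [K [k [confk AK]]]; have [kerk cokk] := conf_kc confk.
exists K, (i ∘ k); split=> //.
apply: inflation_cokernel_conf (pushout_cokernel square_pushout cokk).
have [M [iY [iX [pY [pX bM]]]]] := has_biprod Y X.
apply: (kernel_inflation_of_proj_deflation hC hA AK bM (square_kernel kerk)).
by apply: (square_proj_deflation bM); exists K, k.
Qed.

Lemma square_mono : is_mono f -> is_mono g.
Proof.
move=> fmono; apply: monoP => e u /square_kernel_factor[w -> fw0].
suff -> : w = 0 by rewrite compm0.
by apply: fmono; rewrite fw0 compm0.
Qed.

Section InflationCase.
Variables (W : C) (h : Mor X' W) (k : Mor Y' W).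
Hypotheses (confh : conf f h) (kg : k ∘ g = 0) (ki' : k ∘ i' = h).

Lemma square_cokernel_deflation : A W -> deflation k.
Proof.
move=> AW; case: hA => _ [_ [_ A3]].
have ii' : inflation i' by exists Z, p'.
have dh : deflation h by exists X, f.
have [P [y' [x' [po dy' _]]]] := A3 _ _ _ _ _ ii' dh AW.
have [sq poP] := po.
have sq_u : k ∘ i' = idm W ∘ h by rewrite ki' comp1m.
have [u [[uy' ux'] _]] := poP _ _ _ sq_u.
have sq_v : p' ∘ i' = 0 ∘ h by rewrite kerp'.1 comp0m.
have [v [[vy' vx'] _]] := poP _ _ _ sq_v.
have y'gi0 : y' ∘ g ∘ i = 0.
  by rewrite -compA hsq1 compA sq -compA (conf_kc confh).1.1 compm0.
have [z [zp _]] := cokp.2 _ _ y'gi0.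
have pepi : is_epi p := cokernel_epi cokp.
have vz : v ∘ z = idm Z by apply: pepi; rewrite -compA zp compA vy' hsq2 comp1m.
have uz : u ∘ z = 0 by apply: pepi; rewrite -compA zp compA uy' kg comp0m.
have y'E : x' ∘ k + z ∘ p' = y'.
  apply: (pushout_ext square_pushout).
    by rewrite compDl -!compA kg hsq2 compm0 add0r zp.
  by rewrite compDl -!compA ki' kerp'.1 compm0 addr0 sq.
have sumP : x' ∘ u + z ∘ v = idm P.
  apply: (pushout_ext po); rewrite comp1m compDl -!compA.
    by rewrite uy' vy'.
  by rewrite ux' vx' compm1 compm0 addr0.
have bP : is_biprod x' z u v by [].
by rewrite -uy'; exact (deflation_comp hC dy' (biprod_proj_deflation hC hA bP)).
Qed.

Lemma square_kernel_of_cokernel : is_kernel g k.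
Proof.
have [kerh _] := conf_kc confh.
have gmono : is_mono g by apply: square_mono; exact: kernel_mono kerh.
apply: kernel_intro => // e e0 ke0.
have [Q [s [j [q [r [_ dd]]]]]] := codiag_deflation.
case: hC => _ [_ R2].
have [E [t [e1 [[sq _] de1]]]] := R2 _ _ _ _ e0 dd.
have hrt0 : h ∘ (r ∘ t) = 0.
  have kdt0 : k ∘ ((g ∘ q + i' ∘ r) ∘ t) = 0 by rewrite sq compA ke0 comp0m.
  by rewrite compDl compDr !compA kg !comp0m add0r ki' in kdt0; rewrite compA.
have [w [fw _]] := kerh.2 _ _ hrt0.
have e0e1 : e0 ∘ e1 = g ∘ (q ∘ t + i ∘ w).
  by rewrite -sq compDr (compA g i) hsq1 -compA fw compDl !compA.
have [v ->] := mono_factor_through_deflation gmono de1 e0e1.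
by exists v.
Qed.

End InflationCase.

Lemma square_Ainv_inflation : Ainv_inflation A f -> Ainv_inflation A g.
Proof.
move=> [W [h [confh AW]]].
have [_ po] := square_pushout.
have sq : 0 ∘ i = h ∘ f by rewrite comp0m (conf_kc confh).1.1.
have [k [[kg ki'] _]] := po W _ _ sq.
exists W, k; split=> //.
exact: deflation_kernel_conf (square_cokernel_deflation confh kg ki' AW)
  (square_kernel_of_cokernel confh kg ki').
Qed.

End Diagram.

Theorem mainTheorem11 (C : ConfCat) (A : C -> Prop)
  (hC : deflation_exact C) (hA : adm_defl_percolating A)
  (X Y Z X' Y' : C)
  (i : Mor X Y) (p : Mor Y Z) (i' : Mor X' Y') (p' : Mor Y' Z)
  (f : Mor X X') (g : Mor Y Y')
  (hrow1 : conf i p) (hrow2 : conf i' p')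
  (hsq1 : mcomp g i = mcomp i' f) (hsq2 : mcomp p' g = p) :
  (Ainv_inflation A f -> Ainv_inflation A g) /\
  (Ainv_deflation A f -> Ainv_deflation A g).
Proof.
split.
- exact: (square_Ainv_inflation hC hA hrow1 hrow2 hsq1 hsq2).
- exact: (square_Ainv_deflation hC hA hrow1 hrow2 hsq1 hsq2).
Qed.
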